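(* Let $p\ge1$, $n>1$ be integers, $\mathcal E,\mathcal F$ Hilbert spaces, and for $i=1,\ldots,n-1$ let $\Phi_i(z)=\sum_{\ell=0}^pA_\ell^{(i)}z^\ell\in H^\infty\mathcal L(\mathcal E)$ and $\tilde\Phi_i(z)=\sum_{\ell=0}^p\tilde A_\ell^{(i)}z^\ell\in H^\infty\mathcal L(\mathcal F)$ with $A_\ell^{(i)}\in\mathcal L(\mathcal E)$, $\tilde A_\ell^{(i)}\in\mathcal L(\mathcal F)$. Then the $n$-tuple $(T_{\Phi_1},\dots,T_{\Phi_{n-1}},T_z)$ on $H^2(\mathcal E)$ is unitarily equivalent to the $n$-tuple $(T_{\tilde\Phi_1},\dots,T_{\tilde\Phi_{n-1}},T_z)$ on $H^2(\mathcal F)$ if and only if the tuples $(A_\ell^{(i)})_{i=1,\ell=0}^{n-1,p}$ and $(\tilde A_\ell^{(i)})_{i=1,\ell=0}^{n-1,p}$ are unitarily equivalent, i.e. there is a unitary $W:\mathcal E\to\mathcal F$ with $WA_\ell^{(i)}W^*=\tilde A_\ell^{(i)}$ for all $i,\ell$.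
   Context: $H^2(\mathcal E)$ is the $\mathcal E$-valued Hardy space on $\mathbb D$, $H^\infty\mathcal L(\mathcal E)$ the bounded analytic $\mathcal L(\mathcal E)$-valued functions on $\mathbb D$, $T_\Phi$ the multiplication operator $f\mapsto\Phi f$ on $H^2(\mathcal E)$, and $T_z$ the unilateral shift. Unitary equivalence of operator tuples means a single unitary intertwines all corresponding entries. *)

From HB Require Import structures.
From mathcomp Require Import all_boot all_order all_algebra.
From mathcomp Require Import complex.
From mathcomp Require Import boolp classical_sets reals.
Set Implicit Arguments. Unset Strict Implicit. Unset Printing Implicit Defensive.
Import Order.TTheory GRing.Theory Num.Theory.
Local Open Scope ring_scope.

Section Hilbert.
Variable R : realType.
Local Notation C := R[i].

Record inner_product (V : lmodType C) (ip : V -> V -> C) : Prop := {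
  ip_linl : forall (a : C) (x y z : V), ip (a *: x + y) z = a * ip x z + ip y z;
  ip_conj : forall x y : V, ip y x = conjc (ip x y);
  ip_ge0  : forall x : V, 0 <= ip x x;
  ip_def  : forall x : V, ip x x = 0 -> x = 0 }.

Definition ipnorm (V : lmodType C) (ip : V -> V -> C) (x : V) : R :=
  Num.sqrt (complex.Re (ip x x)).

Definition ip_complete (V : lmodType C) (ip : V -> V -> C) : Prop :=
  forall u : nat -> V,
    (forall e : R, 0 < e -> exists N, forall m k, (N <= m)%N -> (N <= k)%N ->
        ipnorm ip (u m - u k) < e) ->
    exists l : V, forall e : R, 0 < e -> exists N, forall k, (N <= k)%N ->
        ipnorm ip (u k - l) < e.

Definition hilbert (V : lmodType C) (ip : V -> V -> C) : Prop :=
  inner_product ip /\ ip_complete ip.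

Definition bounded_op (V : lmodType C) (ip : V -> V -> C) (T : V -> V) : Prop :=
  (forall (a : C) (x y : V), T (a *: x + y) = a *: T x + T y) /\
  (exists M : R, forall x, ipnorm ip (T x) <= M * ipnorm ip x).

Definition unitary (V U : lmodType C) (ipV : V -> V -> C) (ipU : U -> U -> C)
  (W : V -> U) : Prop :=
  (forall (a : C) (x y : V), W (a *: x + y) = a *: W x + W y) /\
  (forall x, ipnorm ipU (W x) = ipnorm ipV x) /\
  (forall y, exists x, W x = y).

Definition adjoint_of (V U : lmodType C) (ipV : V -> V -> C) (ipU : U -> U -> C)
  (W : V -> U) (Wa : U -> V) : Prop :=
  forall x y, ipU (W x) y = ipV x (Wa y).

(* H^2(V), realised via Taylor coefficients as l^2(N, V) *)
Definition psum2 (V : lmodType C) (ip : V -> V -> C) (f : nat -> V) (N : nat) : R :=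
  \sum_(k < N) ipnorm ip (f k) ^+ 2.

Definition inH2 (V : lmodType C) (ip : V -> V -> C) (f : nat -> V) : Prop :=
  exists M : R, forall N, psum2 ip f N <= M.

Definition H2norm2 (V : lmodType C) (ip : V -> V -> C) (f : nat -> V) : R :=
  reals.sup (fun x : R => exists N, x = psum2 ip f N).

(* unitary operator H^2(V) -> H^2(U) (only its values on H^2(V) matter) *)
Definition unitary_H2 (V U : lmodType C) (ipV : V -> V -> C) (ipU : U -> U -> C)
  (T : (nat -> V) -> (nat -> U)) : Prop :=
  (forall f, inH2 ipV f -> inH2 ipU (T f)) /\
  (forall (a : C) (f g : nat -> V), inH2 ipV f -> inH2 ipV g ->
      T (fun k => a *: f k + g k) = (fun k => a *: T f k + T g k)) /\
  (forall f, inH2 ipV f -> H2norm2 ipU (T f) = H2norm2 ipV f) /\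
  (forall g, inH2 ipU g -> exists f, inH2 ipV f /\ T f = g).

(* T_Phi for Phi(z) = sum_{l<=p} A_l z^l : (Phi f)_k = sum_{l <= min(p,k)} A_l f_{k-l} *)
Definition toeplitz (V : lmodType C) (p : nat) (A : 'I_p.+1 -> V -> V)
  (f : nat -> V) : nat -> V :=
  fun k => \sum_(l < p.+1 | (l <= k)%N) A l (f (k - l)%N).

(* T_z : the unilateral shift *)
Definition shiftH2 (V : lmodType C) (f : nat -> V) : nat -> V :=
  fun k => if k is k'.+1 then f k' else 0.

End Hilbert.

From HB Require Import structures.
From mathcomp Require Import all_boot all_order all_algebra.
From mathcomp Require Import complex.
From mathcomp Require Import boolp reals.
From mathcomp Require Import lra.
Import Order.TTheory GRing.Theory Num.Theory.
Local Open Scope ring_scope.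
Set Implicit Arguments.
Unset Strict Implicit.
Unset Printing Implicit Defensive.

(* If W : E -> F is unitary with W A_l W^* = A~_l for all l, then W applied
   coefficientwise is a unitary of H^2 intertwining T_z and every T_Phi.
   Conversely, let U be a unitary of H^2 commuting with T_z and g := U e for a
   constant e.  Choosing h with U h = -(g - g(0))/z gives U(e + z h) = g(0),
   and comparing norms,
     ||g(0)||^2 + ||g - g(0)||^2 = ||e||^2,
     ||g(0)||^2 = ||e||^2 + ||h||^2 = ||e||^2 + ||g - g(0)||^2,
   forces g = g(0): U maps constants to constants.  Peeling off constant terms
   with T_z, U acts on polynomials coefficientwise by the unitary W := U|_E.
   Since T_Phi e = sum_l (A_l e) z^l is a polynomial, comparing coefficients
   in U T_Phi e = T_Phi~ U e gives W A_l = A~_l W. *)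

Section HilbertSpaces.
Variable R : realType.
Local Notation C := R[i].
Local Notation Re := complex.Re.

Section InnerProduct.
Variables (V : lmodType C) (ip : V -> V -> C).
Hypothesis V_ip : inner_product ip.

Lemma ip0l z : ip 0 z = 0.
Proof.
by have := ip_linl V_ip (-1) 0 0 z; rewrite scaler0 addr0 mulN1r addNr.
Qed.

Lemma ipDl x y z : ip (x + y) z = ip x z + ip y z.
Proof. by have := ip_linl V_ip 1 x y z; rewrite scale1r mul1r. Qed.

Lemma ipZl a x z : ip (a *: x) z = a * ip x z.
Proof. by have := ip_linl V_ip a x 0 z; rewrite !addr0 ip0l addr0. Qed.

Lemma ipNl x z : ip (- x) z = - ip x z.
Proof. by rewrite -scaleN1r ipZl mulN1r. Qed.

Lemma ipDr x y z : ip z (x + y) = ip z x + ip z y.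
Proof. by rewrite !(ip_conj V_ip _ z) ipDl rmorphD. Qed.

Lemma ipNr x z : ip z (- x) = - ip z x.
Proof. by rewrite !(ip_conj V_ip _ z) ipNl rmorphN. Qed.

Lemma ipnorm_ge0 x : 0 <= ipnorm ip x.
Proof. exact: sqrtr_ge0. Qed.

Lemma ipnorm_sqr x : ipnorm ip x ^+ 2 = Re (ip x x).
Proof.
by rewrite /ipnorm sqr_sqrtr //; have := ip_ge0 V_ip x; rewrite lecE => /andP[].
Qed.

Lemma ipnorm0 : ipnorm ip 0 = 0.
Proof. by rewrite /ipnorm ip0l sqrtr0. Qed.

Lemma ipnorm_eq0 x : (ipnorm ip x == 0) = (x == 0).
Proof.
apply/idP/eqP=> [/eqP x0 | ->]; last by rewrite ipnorm0.
apply: (ip_def V_ip); rewrite -(RRe_real (ger0_real (ip_ge0 V_ip x))).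
by rewrite -ipnorm_sqr x0 expr0n.
Qed.

Lemma ipnormN x : ipnorm ip (- x) = ipnorm ip x.
Proof. by rewrite /ipnorm ipNl ipNr opprK. Qed.

Lemma Re_ipD x y :
  Re (ip (x + y) (x + y)) = Re (ip x x) + Re (ip y y) + 2 * Re (ip x y).
Proof.
have ReJ (z : C) : Re (conjc z) = Re z by case: z.
rewrite ipDl !ipDr !raddfD /= [ip y x](ip_conj V_ip) ReJ; lra.
Qed.

End InnerProduct.

Section NormEquivalence.
Variables (V U : lmodType C) (ipV : V -> V -> C) (ipU : U -> U -> C).
Variables (f : nat -> V) (g : nat -> U).
Hypothesis eq_norm : forall k, ipnorm ipU (g k) = ipnorm ipV (f k).

Lemma eq_psum2 : psum2 ipU g = psum2 ipV f.
Proof. by apply: funext => N; apply: eq_bigr => k _; rewrite eq_norm. Qed.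

Lemma eq_inH2 : inH2 ipU g <-> inH2 ipV f.
Proof. by rewrite /inH2 eq_psum2. Qed.

Lemma eq_H2norm2 : H2norm2 ipU g = H2norm2 ipV f.
Proof. by rewrite /H2norm2 eq_psum2. Qed.

End NormEquivalence.

Section LinearIsometry.
Variables (V U : lmodType C) (W : V -> U).
Hypothesis W_linear : linear W.
HB.instance Definition _ := GRing.isLinear.Build C V U *:%R W W_linear.

Lemma linear_map0 : W 0 = 0.
Proof. exact: linear0. Qed.

Variables (ipV : V -> V -> C) (ipU : U -> U -> C).
Hypotheses (V_ip : inner_product ipV) (U_ip : inner_product ipU).
Hypothesis W_isometry : forall x, ipnorm ipU (W x) = ipnorm ipV x.

Lemma isometry_ip x y : ipU (W x) (W y) = ipV x y.
Proof.
have ReW x1 y1 : Re (ipU (W x1) (W y1)) = Re (ipV x1 y1).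
  have Re_sqr z : Re (ipU (W z) (W z)) = Re (ipV z z).
    by rewrite -(ipnorm_sqr U_ip) -(ipnorm_sqr V_ip) W_isometry.
  have := Re_sqr (x1 + y1); rewrite linearD !Re_ipD // !Re_sqr => /addrI.
  by apply: mulfI; rewrite pnatr_eq0.
apply/eqP; rewrite eq_complex ReW eqxx /=.
have := ReW ('i%C *: x) y; rewrite linearZ (ipZl U_ip) (ipZl V_ip).
by rewrite !(mulrC 'i%C) !ReiNIm => /oppr_inj ->.
Qed.

Lemma adjoint_isometryK Wa : adjoint_of ipV ipU W Wa -> cancel W Wa.
Proof.
move=> W_adj x; apply/eqP; rewrite -subr_eq0; apply/eqP/(ip_def V_ip).
by rewrite (ipDr V_ip) (ipNr V_ip) -W_adj isometry_ip addrN.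
Qed.

Hypothesis W_surj : forall y, exists x, W x = y.

Lemma unitary_adjoint : exists Wa, adjoint_of ipV ipU W Wa /\ cancel Wa W.
Proof.
have [Wa WaK] := choice W_surj; exists Wa; split=> // x y.
by rewrite -{1}(WaK y) isometry_ip.
Qed.

Lemma unitary_H2_comp : unitary_H2 ipV ipU (fun f k => W (f k)).
Proof.
have [Wa WaK] := choice W_surj.
split; [|split; [|split]].
- by move=> f /(eq_inH2 (fun k => W_isometry (f k))).
- by move=> a f g _ _; apply: funext => k; apply: W_linear.
- by move=> f _; apply: eq_H2norm2 => k; apply: W_isometry.
- move=> g g_in; exists (fun k => Wa (g k)); split; last by apply: funext => k.
  have Wa_norm k : ipnorm ipV (Wa (g k)) = ipnorm ipU (g k).
    by rewrite -W_isometry WaK.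
  exact/(eq_inH2 Wa_norm).
Qed.

Lemma toeplitz_comp p (B : 'I_p.+1 -> V -> V) (B' : 'I_p.+1 -> U -> U) f :
    (forall l x, W (B l x) = B' l (W x)) ->
  (fun k => W (toeplitz B f k)) = toeplitz B' (fun k => W (f k)).
Proof.
by move=> WB; apply: funext => k; rewrite linear_sum; apply: eq_bigr => l _.
Qed.

Lemma shiftH2_comp f : (fun k => W (shiftH2 f k)) = shiftH2 (fun k => W (f k)).
Proof. by apply: funext => -[|k] //=; rewrite linear0. Qed.

End LinearIsometry.

Section Sequences.
Variable V : lmodType C.

Definition scons (x : V) (f : nat -> V) : nat -> V :=
  fun k => if k is k'.+1 then f k' else x.

Definition stail (f : nat -> V) : nat -> V := fun k => f k.+1.

Definition constH2 (x : V) : nat -> V := scons x (fun _ => 0).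

Lemma scons_stail f : scons (f 0%N) (stail f) = f.
Proof. by apply: funext => -[]. Qed.

Lemma scons_split x f : scons x f = (fun k => 1 *: constH2 x k + shiftH2 f k).
Proof.
by apply: funext => -[|k] /=; rewrite scale1r ?addr0 ?scaler0 ?add0r.
Qed.

Lemma constH2_linear a x y :
  constH2 (a *: x + y) = (fun k => a *: constH2 x k + constH2 y k).
Proof. by apply: funext => -[|k] //=; rewrite scaler0 addr0. Qed.

Lemma toeplitz_constH2 p (B : 'I_p.+1 -> V -> V) x (l : 'I_p.+1) :
  (forall m, B m 0 = 0) -> toeplitz B (constH2 x) l = B l x.
Proof.
move=> B0; rewrite /toeplitz (bigD1 l) //= subnn big1 ?addr0 //.
move=> m /andP[ml ml_neq]; have : (0 < l - m)%N.
  by rewrite subn_gt0 ltn_neqAle ml andbT.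
by case: (l - m)%N => // k _; rewrite B0.
Qed.

Lemma toeplitz_constH2_finsupp p (B : 'I_p.+1 -> V -> V) x k :
  (forall m, B m 0 = 0) -> (p < k)%N -> toeplitz B (constH2 x) k = 0.
Proof.
move=> B0 pk; rewrite /toeplitz big1 // => m _.
have : (0 < k - m)%N by rewrite subn_gt0 (leq_trans (ltn_ord m)).
by case: (k - m)%N => //= j _; rewrite B0.
Qed.

End Sequences.

Section HardySpace.
Variables (V : lmodType C) (ip : V -> V -> C).
Hypothesis V_ip : inner_product ip.

Lemma psum2_0 f : psum2 ip f 0 = 0.
Proof. by rewrite /psum2 big_ord0. Qed.

Lemma psum2_scons x f N :
  psum2 ip (scons x f) N.+1 = ipnorm ip x ^+ 2 + psum2 ip f N.
Proof. by rewrite /psum2 big_ord_recl. Qed.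

Lemma psum2_zero N : psum2 ip (fun _ => 0) N = 0.
Proof.
by rewrite /psum2 big1 // => k _; rewrite ipnorm0 // expr0n.
Qed.

Lemma inH2_scons x f : inH2 ip (scons x f) <-> inH2 ip f.
Proof.
have x2 := sqr_ge0 (ipnorm ip x).
split=> -[M bdM].
  by exists M => N; have := bdM N.+1; rewrite psum2_scons; lra.
exists (ipnorm ip x ^+ 2 + M) => -[|N]; last by rewrite psum2_scons lerD2l.
by have := bdM 0%N; rewrite !psum2_0; lra.
Qed.

Lemma inH2_stail f : inH2 ip f -> inH2 ip (stail f).
Proof. by rewrite -{1}(scons_stail f) => /inH2_scons. Qed.

Lemma inH2_zero : inH2 ip (fun _ => 0).
Proof. by exists 0 => N; rewrite psum2_zero. Qed.

Lemma inH2_constH2 x : inH2 ip (constH2 x).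
Proof. exact/inH2_scons/inH2_zero. Qed.

Lemma inH2_finsupp N f : (forall k, (N <= k)%N -> f k = 0) -> inH2 ip f.
Proof.
elim: N f => [|N IHN] f f0.
  have -> : f = (fun _ => 0) by apply: funext => k; apply: f0.
  exact: inH2_zero.
by rewrite -(scons_stail f); apply/inH2_scons/IHN => k Nk; apply: f0.
Qed.

Lemma H2norm2_ub N f : inH2 ip f -> psum2 ip f N <= H2norm2 ip f.
Proof.
move=> [M bdM]; apply: sup_upper_bound; last by exists N.
by split; [exists (psum2 ip f 0); exists 0%N | exists M => _ [k ->]].
Qed.

Lemma H2norm2_ge0 f : inH2 ip f -> 0 <= H2norm2 ip f.
Proof. by move=> /(H2norm2_ub 0); rewrite psum2_0. Qed.

Lemma H2norm2_scons x f :
  inH2 ip f -> H2norm2 ip (scons x f) = ipnorm ip x ^+ 2 + H2norm2 ip f.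
Proof.
move=> f_in; have sf_in : inH2 ip (scons x f) by apply/inH2_scons.
have x2 := sqr_ge0 (ipnorm ip x); have f2 := H2norm2_ge0 f_in.
apply/le_anti/andP; split.
  apply: ge_sup; first by exists (psum2 ip (scons x f) 0); exists 0%N.
  move=> _ [[|N] ->]; first by rewrite psum2_0; lra.
  by rewrite psum2_scons lerD2l H2norm2_ub.
suff : H2norm2 ip f <= H2norm2 ip (scons x f) - ipnorm ip x ^+ 2 by lra.
apply: ge_sup; first by exists (psum2 ip f 0); exists 0%N.
by move=> _ [N ->]; have := H2norm2_ub N.+1 sf_in; rewrite psum2_scons; lra.
Qed.

Lemma H2norm2_stail f :
  inH2 ip f -> H2norm2 ip f = ipnorm ip (f 0%N) ^+ 2 + H2norm2 ip (stail f).
Proof.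
by move=> f_in; rewrite -{1}(scons_stail f) H2norm2_scons //; apply: inH2_stail.
Qed.

Lemma H2norm2_zero : H2norm2 ip (fun _ => 0) = 0.
Proof.
apply/le_anti; rewrite H2norm2_ge0 ?andbT; last exact: inH2_zero.
apply: ge_sup; first by exists 0; exists 0%N; rewrite psum2_zero.
by move=> _ [N ->]; rewrite psum2_zero.
Qed.

Lemma H2norm2_constH2 x : H2norm2 ip (constH2 x) = ipnorm ip x ^+ 2.
Proof. by rewrite H2norm2_scons ?H2norm2_zero ?addr0 //; apply: inH2_zero. Qed.

Lemma H2norm2_eq0 f : inH2 ip f -> H2norm2 ip f = 0 -> f = fun _ => 0.
Proof.
move=> f_in f0; apply: funext => k; apply/eqP.
rewrite -(ipnorm_eq0 V_ip) -sqrf_eq0 eq_le sqr_ge0 andbT.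
have := H2norm2_ub k.+1 f_in; rewrite f0 /psum2 big_ord_recr /=.
suff : 0 <= \sum_(j < k) ipnorm ip (f j) ^+ 2 by lra.
by apply: sumr_ge0 => j _; apply: sqr_ge0.
Qed.

End HardySpace.

Section ShiftIntertwiner.
Variables (V U : lmodType C) (ipV : V -> V -> C) (ipU : U -> U -> C).
Hypotheses (V_ip : inner_product ipV) (U_ip : inner_product ipU).
Variable T : (nat -> V) -> nat -> U.
Hypothesis T_unitary : unitary_H2 ipV ipU T.
Hypothesis T_shift : forall f, inH2 ipV f -> T (shiftH2 f) = shiftH2 (T f).

Let T_inH2 : forall f, inH2 ipV f -> inH2 ipU (T f) := T_unitary.1.
Let T_linear := T_unitary.2.1.
Let T_norm := T_unitary.2.2.1.
Let T_surj := T_unitary.2.2.2.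

Lemma T_scons x f :
  inH2 ipV f -> T (scons x f) = (fun k => T (constH2 x) k + shiftH2 (T f) k).
Proof.
move=> f_in; rewrite scons_split T_linear.
- by rewrite T_shift //; apply: funext => k; rewrite scale1r.
- exact: inH2_constH2.
- exact/inH2_scons.
Qed.

Lemma T_constH2 x : T (constH2 x) = constH2 (T (constH2 x) 0%N).
Proof.
set g := T (constH2 x); have g_in : inH2 ipU g := T_inH2 (inH2_constH2 V_ip x).
have Ng_in : inH2 ipU (fun k => - stail g k).
  by apply/(eq_inH2 (fun k => ipnormN U_ip (stail g k)))/inH2_stail.
have [h [h_in Th]] := T_surj Ng_in.
have xh_in : inH2 ipV (scons x h) by apply/inH2_scons.
have T_xh : T (scons x h) = constH2 (g 0%N).
  by rewrite T_scons // Th; apply: funext => -[|k] /=; rewrite ?addr0 ?addrN.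
have norm_g := T_norm (inH2_constH2 V_ip x).
have norm_xh := T_norm xh_in.
have norm_h := T_norm h_in.
rewrite -/g (H2norm2_stail g_in) H2norm2_constH2 // in norm_g.
rewrite T_xh (H2norm2_constH2 U_ip) H2norm2_scons // in norm_xh.
rewrite Th (eq_H2norm2 (fun k => ipnormN U_ip (stail g k))) in norm_h.
have tail0 : H2norm2 ipU (stail g) = 0.
  by have := H2norm2_ge0 (inH2_stail g_in); lra.
by rewrite -{1}(scons_stail g) (H2norm2_eq0 U_ip (inH2_stail g_in) tail0).
Qed.

Definition Tconst x := T (constH2 x) 0%N.

Lemma T_scons_stail f :
  inH2 ipV f -> T f = scons (Tconst (f 0%N)) (T (stail f)).
Proof.
move=> f_in; rewrite -{1}(scons_stail f) T_scons; last exact: inH2_stail.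
by rewrite T_constH2; apply: funext => -[|k] /=; rewrite ?addr0 ?add0r.
Qed.

Lemma Tconst_linear : linear Tconst.
Proof.
move=> a x y; rewrite /Tconst constH2_linear T_linear //.
all: exact: inH2_constH2.
Qed.

Lemma Tconst_isometry x : ipnorm ipU (Tconst x) = ipnorm ipV x.
Proof.
have := T_norm (inH2_constH2 V_ip x).
rewrite T_constH2 !H2norm2_constH2 // => /eqP.
by rewrite eqrXn2 ?ipnorm_ge0 // => /eqP.
Qed.

Lemma Tconst_surj y : exists x, Tconst x = y.
Proof.
have [f [f_in Tf]] := T_surj (inH2_constH2 U_ip y).
by exists (f 0%N); have := congr1 (fun g => g 0%N) Tf; rewrite T_scons_stail.
Qed.

Lemma T_finsupp N f :
  (forall k, (N <= k)%N -> f k = 0) -> T f = fun k => Tconst (f k).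
Proof.
elim: N f => [|N IHN] f f0.
  have -> : f = constH2 0 by apply: funext => k; rewrite f0 //; case: k.
  rewrite T_constH2; apply: funext => -[|k] //=.
  by rewrite (linear_map0 Tconst_linear).
have f_in : inH2 ipV f := inH2_finsupp V_ip f0.
rewrite T_scons_stail // (IHN (stail f)) => [|k Nk]; last exact: f0.
by apply: funext => -[].
Qed.

Lemma Tconst_intertwines p (B : 'I_p.+1 -> V -> V) (B' : 'I_p.+1 -> U -> U) :
    (forall l, B l 0 = 0) -> (forall l, B' l 0 = 0) ->
    (forall f, inH2 ipV f -> T (toeplitz B f) = toeplitz B' (T f)) ->
  forall l x, Tconst (B l x) = B' l (Tconst x).
Proof.
move=> B0 B'0 TB l x; have := TB _ (inH2_constH2 V_ip x).
rewrite T_constH2 (@T_finsupp p.+1) => [/(congr1 (fun g => g (val l)))|k pk].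
  by rewrite !toeplitz_constH2.
exact: toeplitz_constH2_finsupp.
Qed.

End ShiftIntertwiner.

End HilbertSpaces.

Theorem theorem3p7 (R : realType) (p n : nat)
  (E F : lmodType R[i]) (ipE : E -> E -> R[i]) (ipF : F -> F -> R[i])
  (A : 'I_n.-1 -> 'I_p.+1 -> E -> E) (At : 'I_n.-1 -> 'I_p.+1 -> F -> F) :
  (1 <= p)%N -> (1 < n)%N ->
  hilbert ipE -> hilbert ipF ->
  (forall i l, bounded_op ipE (A i l)) ->
  (forall i l, bounded_op ipF (At i l)) ->
  (exists U : (nat -> E) -> (nat -> F),
      unitary_H2 ipE ipF U /\
      (forall i f, inH2 ipE f -> U (toeplitz (A i) f) = toeplitz (At i) (U f)) /\
      (forall f, inH2 ipE f -> U (shiftH2 f) = shiftH2 (U f)))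
  <->
  (exists (W : E -> F) (Wa : F -> E),
      unitary ipE ipF W /\ adjoint_of ipE ipF W Wa /\
      (forall i l y, W (A i l (Wa y)) = At i l y)).
Proof.
move=> _ _ [E_ip _] [F_ip _] A_bdd At_bdd.
have A0 i l : A i l 0 = 0 := linear_map0 (A_bdd i l).1.
have At0 i l : At i l 0 = 0 := linear_map0 (At_bdd i l).1.
split=> [[U [U_unitary [U_toeplitz U_shift]]] |
         [W [Wa [W_unitary [W_adj W_A]]]]].
  have W_linear := Tconst_linear E_ip U_unitary.
  have W_isometry := Tconst_isometry E_ip F_ip U_unitary U_shift.
  have W_surj := Tconst_surj E_ip F_ip U_unitary U_shift.
  have [Wa [W_adj WaK]] := unitary_adjoint W_linear E_ip F_ip W_isometry W_surj.
  have W_A i := Tconst_intertwines E_ip F_ip U_unitary U_shift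
    (A0 i) (At0 i) (U_toeplitz i).
  exists (Tconst U), Wa; do 2!split => //.
  by move=> i l y; rewrite W_A WaK.
have [W_linear [W_isometry W_surj]] := W_unitary.
have WK := adjoint_isometryK W_linear E_ip F_ip W_isometry W_adj.
exists (fun f k => W (f k)); split; first exact: unitary_H2_comp.
split=> [i f _ | f _]; last exact: shiftH2_comp.
by apply: toeplitz_comp => // l x; rewrite -W_A WK.
Qed.
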